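(* A shift space $X$ is eventually dendric if and only if there is an integer $n\ge 0$ such that every word $w\in LS_{\ge n}(X)$ has exactly one letter $b\in A$ with $wb\in LS(X)$ (equivalently $wb\in LS_{\ge n+1}(X)$), and this letter moreover satisfies $\ell(wb)=\ell(w)$.
   Context: $A$ is a finite alphabet; a shift space is a closed shift-invariant subset $X\subseteq A^{\mathbb Z}$; $\mathcal L(X)$ is its set of finite factors, $\mathcal L_n(X)=\mathcal L(X)\cap A^n$, $\mathcal L_{\ge n}(X)=\bigcup_{k\ge n}\mathcal L_k(X)$. For $w\in\mathcal L(X)$, $L_1(w)=\{a\in A: aw\in\mathcal L(X)\}$, $R_1(w)=\{b\in A: wb\in\mathcal L(X)\}$, $\ell(w)=\mathrm{Card}\,L_1(w)$. A word $w$ is left-special if $\ell(w)\ge 2$; $LS_n(X)$ (resp. $LS_{\ge n}(X)$) is the set of left-special words of $\mathcal L(X)$ of length $n$ (resp. at least $n$), and $LS(X)=\bigcup_{n\ge1}LS_n(X)$. The extension graph $\mathcal E_1(w)$ is the undirected bipartite graph with vertex set the disjoint union of $L_1(w)$ and $R_1(w)$ and an edge $(a,b)$ iff $awb\in\mathcal L(X)$. $X$ is eventually dendric with threshold $m\ge0$ if $\mathcal E_1(w)$ is a tree for every $w\in\mathcal L_{\ge m}(X)$, and eventually dendric if this holds for some $m$. *)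

From Stdlib Require Import ZArith ClassicalEpsilon.
From mathcomp Require Import all_boot.
Set Implicit Arguments. Unset Strict Implicit. Unset Printing Implicit Defensive.

Section Shifts.
Variable A : finType.

Definition config := Z -> A.

Definition shift (x : config) : config := fun i => x (i + 1)%Z.

(* X is closed in the product topology of A^Z (A discrete): any configuration
   which agrees with an element of X on every central window [-n,n] is in X. *)
Definition closed_set (X : config -> Prop) : Prop :=
  forall x : config,
    (forall n : nat, exists y, X y /\ forall i : Z, (Z.abs i <= Z.of_nat n)%Z -> y i = x i) ->
    X x.

Definition shift_invariant (X : config -> Prop) : Prop :=
  (forall x, X x -> X (shift x)) /\ (forall x, X (shift x) -> X x).

Definition shift_space (X : config -> Prop) : Prop :=
  closed_set X /\ shift_invariant X.

Definition occurs_at (x : config) (i : Z) (w : seq A) : Prop :=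
  [seq x (i + Z.of_nat k)%Z | k <- iota 0 (size w)] = w.

Definition asb (P : Prop) : bool :=
  if excluded_middle_informative P then true else false.

Definition Lang (X : config -> Prop) (w : seq A) : bool :=
  asb (exists x i, X x /\ occurs_at x i w).

Definition L1 X (w : seq A) : {set A} := [set a | Lang X (a :: w)].
Definition R1 X (w : seq A) : {set A} := [set b | Lang X (rcons w b)].
Definition ell X (w : seq A) : nat := #|L1 X w|.

(* left-special words (of any length, including possibly the empty word) *)
Definition left_special X (w : seq A) : bool := Lang X w && (2 <= ell X w).

(* w \in LS(X) = union of LS_n(X), n >= 1 *)
Definition in_LS X (w : seq A) : bool := left_special X w && (1 <= size w).

Definition in_LS_ge X (n : nat) (w : seq A) : bool := left_special X w && (n <= size w).

(* Extension graph E_1(w): vertex set L1(w) (tagged inl) disjoint union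
   R1(w) (tagged inr); undirected edge {inl a, inr b} iff a w b \in L(X). *)
Definition ext_vert X (w : seq A) : pred (A + A) :=
  fun u => match u with inl a => a \in L1 X w | inr b => b \in R1 X w end.

Definition ext_edge X (w : seq A) : rel (A + A) :=
  fun u v => match u, v with
             | inl a, inr b => Lang X (a :: rcons w b)
             | inr b, inl a => Lang X (a :: rcons w b)
             | _, _ => false
             end.

End Shifts.

(* A finite simple undirected graph given by a vertex predicate V and a
   symmetric irreflexive edge relation e (restricted to V) is a tree iff it is
   nonempty, connected, and has no cycle (a cycle = closed walk through >= 3
   pairwise distinct vertices). *)
Definition is_tree (T : finType) (V : pred T) (e : rel T) : Prop :=
  let e' := [rel u v | [&& V u, V v & e u v]] in
  (exists v, V v) /\
  (forall u v, V u -> V v -> connect e' u v) /\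
  (forall c : seq T, uniq c -> 3 <= size c -> ~~ cycle e' c).

Definition ext_tree (A : finType) (X : config A -> Prop) (w : seq A) : Prop :=
  is_tree (ext_vert X w) (ext_edge X w).

Definition eventually_dendric_thr (A : finType) (X : config A -> Prop) (m : nat) : Prop :=
  forall w : seq A, Lang X w -> m <= size w -> ext_tree X w.

Definition eventually_dendric (A : finType) (X : config A -> Prop) : Prop :=
  exists m : nat, eventually_dendric_thr X m.

From Stdlib Require Import ZArith Lia ClassicalEpsilon Classical.
From mathcomp Require Import all_boot zify.
Set Implicit Arguments. Unset Strict Implicit. Unset Printing Implicit Defensive.

(* When the extension graph of w is a tree, the neighbourhood of a right vertex b is L1(wb),
   so counting the edges of the tree gives sum_b (l(wb) - 1) <= l(w) - 1, and connectivity
   gives every left-special word w a left-special extension wb.  Hence, beyond the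
   threshold, the number of left-special words of length k is nondecreasing and bounded by
   the total excess sum_{|w| = k} (l(w) - 1), which is nonincreasing.  It is therefore
   eventually constant, which forces each long left-special word to have exactly one
   left-special extension wb, and connectivity forces L1(wb) = L1(w).  Conversely, under
   that condition the extension graph of a long factor w is a star around b (or around
   the only left extension of w when w is not left special), hence a tree. *)

Section Language.
Variables (A : finType) (X : config A -> Prop).

Lemma LangP w : Lang X w <-> exists x i, X x /\ occurs_at x i w.
Proof. by rewrite /Lang /asb; case: excluded_middle_informative. Qed.

Lemma occurs_at_cons (x : config A) i a w :
  occurs_at x i (a :: w) <-> x i = a /\ occurs_at x (i + 1) w.
Proof.
rewrite /occurs_at /= Z.add_0_r (iotaDl 1 0) -map_comp.
rewrite (eq_map (g := fun k => x ((i + 1) + Z.of_nat k)%Z)); last first.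
  by move=> k /=; congr x; lia.
by split=> [[-> ->] | [-> ->]].
Qed.

Lemma occurs_at_prefix (x : config A) i (w u : seq A) :
  occurs_at x i (w ++ u) -> occurs_at x i w.
Proof.
rewrite /occurs_at size_cat iotaD map_cat => /eqP.
by rewrite eqseq_cat ?size_map ?size_iota // => /andP [/eqP].
Qed.

Lemma Lang_behead a w : Lang X (a :: w) -> Lang X w.
Proof.
by case/LangP=> x [i [Xx /occurs_at_cons [_ occ]]]; apply/LangP; exists x, (i + 1)%Z.
Qed.

Lemma Lang_belast w b : Lang X (rcons w b) -> Lang X w.
Proof.
rewrite -cats1 => /LangP [x [i [Xx /occurs_at_prefix occ]]].
by apply/LangP; exists x, i.
Qed.

Lemma Lang_extend_left w : Lang X w -> exists a, a \in L1 X w.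
Proof.
case/LangP=> x [i [Xx occ]]; exists (x (i - 1)%Z); rewrite inE.
apply/LangP; exists x, (i - 1)%Z; split=> //.
by apply/occurs_at_cons; rewrite Z.sub_add.
Qed.

Lemma L1_behead a w : a \in L1 X w -> Lang X w.
Proof. by rewrite inE => /Lang_behead. Qed.

Lemma ell_eq0 w : ~~ Lang X w -> ell X w = 0.
Proof.
move=> nLw; apply/eqP; rewrite cards_eq0; apply/eqP/setP => a.
by rewrite !inE; apply: contraNF nLw => /Lang_behead.
Qed.

Lemma L1_rcons w b : L1 X (rcons w b) \subset L1 X w.
Proof. by apply/subsetP => a; rewrite !inE -rcons_cons => /Lang_belast. Qed.

Lemma ell_rcons w b : ell X (rcons w b) <= ell X w.
Proof. exact: subset_leq_card (L1_rcons w b). Qed.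

Lemma ell_gt1_left_special w : 1 < ell X w -> left_special X w.
Proof.
move=> ell_w; rewrite /left_special ell_w andbT.
by move: ell_w => /card_gt1P [a [_ [aL _ _]]]; apply: L1_behead aL.
Qed.

End Language.

Section Acyclic.
Variables (T : finType) (r : rel T).
Hypotheses (r_sym : symmetric r) (r_irr : irreflexive r).

Definition acyclic := forall c : seq T, uniq c -> 3 <= size c -> ~~ cycle r c.

Lemma acyclic_nbr_on_path x p u : acyclic -> path r x p -> uniq (x :: p) ->
  u \in p -> r x u -> u = head x p.
Proof.
move=> acyc + + u_p; case/splitPr: u_p => p1 p2 pth uniq_p rxu.
case: p1 pth uniq_p => [//|y p1] pth uniq_p; apply/eqP/negP => u_y.
have cyc : cycle r (x :: rcons (y :: p1) u).
  move: pth; rewrite -cat_rcons cat_path => /andP [pth _].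
  by rewrite /cycle rcons_path pth last_rcons r_sym rxu.
have uniq_c : uniq (x :: rcons (y :: p1) u).
  apply: subseq_uniq uniq_p; rewrite -cats1.
  by apply: (@cat_subseq _ (x :: y :: p1) _ (x :: y :: p1)); rewrite ?sub1seq ?mem_head.
by move: (acyc _ uniq_c); rewrite cyc /= size_rcons => /(_ isT).
Qed.

Lemma acyclic_path_leaf x p : acyclic -> path r x p -> uniq (x :: p) -> p != [::] ->
  exists v u, r v u /\ forall u', r v u' -> u' = u.
Proof.
move=> acyc; have [n] := ubnP (#|T| - size p).
elim: n x p => // n IH x [//|y q] lt_n pth uniq_p _.
case: (pickP [pred u | r x u & u != y]) => [u /andP [rxu u_y] | no_other].
  have u_notin : u \notin x :: y :: q.
    rewrite in_cons negb_or; apply/andP; split.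
      by apply: contraTneq rxu => ->; rewrite r_irr.
    by apply: contra u_y => /(acyclic_nbr_on_path acyc pth uniq_p)/(_ rxu) ->.
  have uniq_u : uniq (u :: x :: y :: q) by rewrite /= u_notin.
  apply: (IH u (x :: y :: q)) => //=; last by rewrite r_sym rxu.
  by move: (card_uniqP uniq_u) (max_card (mem (u :: x :: y :: q))) lt_n => /= -> /=; lia.
exists x, y; split=> [|u rxu]; first by case/andP: pth.
by apply/eqP; move: (no_other u); rewrite /= rxu => /negbFE.
Qed.

Lemma acyclic_leaf x y : acyclic -> r x y ->
  exists v u, r v u /\ forall u', r v u' -> u' = u.
Proof.
move=> acyc rxy; apply: (@acyclic_path_leaf x [:: y] acyc); rewrite /= ?rxy //.
by rewrite inE andbT; apply: contraTneq rxy => ->; rewrite r_irr.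
Qed.

Lemma cycle_two_nbrs c v : uniq c -> 3 <= size c -> cycle r c -> v \in c ->
  exists u1 u2, [/\ u1 \in c, u2 \in c, u1 != u2, r v u1 & r v u2].
Proof.
move=> uniq_c size_c cyc /rot_to [i s rot_c].
have mem_s z : z \in v :: s -> z \in c by rewrite -rot_c mem_rot.
have uniq_s : uniq (v :: s) by rewrite -rot_c rot_uniq.
have cyc_s : cycle r (v :: s) by rewrite -rot_c rot_cycle.
have size_s : 3 <= size (v :: s) by rewrite -rot_c size_rot.
have last_s : r v (last v s).
  by move: cyc_s; rewrite /cycle rcons_path r_sym => /andP [].
case: s {rot_c} mem_s uniq_s cyc_s size_s last_s => [|y [|z t]] //= mem_s.
move=> /and3P [_ y_notin _] /andP [rvy _] _ rvl.
exists y, (last z t); split=> //.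
- by apply: mem_s; rewrite !inE eqxx orbT.
- by apply: mem_s; rewrite in_cons (in_cons y) mem_last !orbT.
- by apply: contraNneq y_notin => ->; rewrite mem_last.
Qed.

End Acyclic.

Section Bipartite.
Variables (T : finType) (E : T -> T -> bool).
Implicit Types (L R : {set T}) (a b : T).

Definition bip_rel (L R : {set T}) : rel (T + T) :=
  fun u v => match u, v with
  | inl a, inr b | inr b, inl a => [&& a \in L, b \in R & E a b]
  | _, _ => false
  end.

Definition nbhd (L : {set T}) b := [set a in L | E a b].

Lemma bip_rel_sym L R : symmetric (bip_rel L R).
Proof. by case=> [a|b] [a'|b']. Qed.

Lemma bip_rel_irr L R : irreflexive (bip_rel L R).
Proof. by case. Qed.

Lemma bip_relE L R a b : b \in R -> bip_rel L R (inl a) (inr b) = (a \in nbhd L b).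
Proof. by move=> bR; rewrite /= bR inE. Qed.

Lemma acyclic_subset L R L' R' : L' \subset L -> R' \subset R ->
  acyclic (bip_rel L R) -> acyclic (bip_rel L' R').
Proof.
move=> sLL' sRR' acyc c uniq_c size_c; apply: contraNN (acyc c uniq_c size_c).
by apply: sub_cycle => -[a|b] [a'|b'] //= /and3P [aL bR ->];
  rewrite (subsetP sLL' _ aL) (subsetP sRR' _ bR).
Qed.

Lemma nbhd_sub L b : nbhd L b \subset L.
Proof. by apply/subsetP => a; rewrite inE => /andP []. Qed.

Lemma nbhd_setD1 L a b : nbhd (L :\ a) b = nbhd L b :\ a.
Proof. by apply/setP => x; rewrite !inE andbA. Qed.

Lemma sum_excess_setD1_leaf L R a b0 :
  b0 \in R -> a \in nbhd L b0 -> 1 < #|nbhd L b0| ->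
  (forall b, b \in R -> a \in nbhd L b -> b = b0) ->
  \sum_(b in R) (#|nbhd L b|).-1 = (\sum_(b in R) (#|nbhd (L :\ a) b|).-1).+1.
Proof.
move=> b0R a_b0 gt1 leaf; rewrite !(big_setD1 b0 b0R) /=.
rewrite (eq_bigr (fun b => (#|nbhd (L :\ a) b|).-1)); last first.
  move=> b; rewrite !inE => /andP [b_b0 bR]; rewrite nbhd_setD1 (cardsD1 a (nbhd L b)).
  by have /negbTE -> : a \notin nbhd L b by apply: contra b_b0 => /(leaf b bR)/eqP.
move: gt1; rewrite nbhd_setD1 (cardsD1 a (nbhd L b0)) a_b0; lia.
Qed.

Lemma acyclic_sum_excess L R :
  acyclic (bip_rel L R) -> \sum_(b in R) (#|nbhd L b|).-1 <= (#|L|).-1.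
Proof.
(* Right vertices of degree <= 1 can be dropped; otherwise a leaf of the forest is a left
   vertex, whose removal lowers both sides by one. *)
have [n] := ubnP (#|L| + #|R|); elim: n L R => // n IH L R lt_n acyc.
case: (pickP [pred b in R | #|nbhd L b| <= 1]) => [b /andP [bR le1] | no_small].
  rewrite (big_setD1 b bR) /= (_ : (#|nbhd L b|).-1 = 0); last first.
    by move: le1; case: #|_| => [|[]].
  apply: IH; first by move: lt_n; rewrite (cardsD1 b R) bR; lia.
  by apply: acyclic_subset acyc => //; apply: subsetDl.
have gt1 b : b \in R -> 1 < #|nbhd L b|.
  by move=> bR; move: (no_small b); rewrite /= bR ltnNge => /negbT.
have [-> | [b0 b0R]] := set_0Vmem R; first by rewrite big_set0.
have [a0 a0_b0] : exists a0, a0 \in nbhd L b0.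
  by apply/set0Pn; rewrite -card_gt0 ltnW ?gt1.
have edge : bip_rel L R (inl a0) (inr b0) by rewrite bip_relE.
have [v [u [vu leaf]]] := acyclic_leaf (@bip_rel_sym L R) (@bip_rel_irr L R) acyc edge.
case: v u vu leaf => [a|b] [a'|b'] //= /and3P [aL bR Eab] leaf; last first.
  case/card_gt1P: (gt1 b bR) => a1 [a2 [a1_b a2_b]].
  move: (leaf (inl a1)) (leaf (inl a2)) a1_b a2_b; rewrite /= bR !inE.
  by move=> leaf1 leaf2 /leaf1 [->] /leaf2 [->]; rewrite eqxx.
have a_b' : a \in nbhd L b' by rewrite inE aL.
rewrite (sum_excess_setD1_leaf bR a_b' (gt1 b' bR)); last first.
  move=> b bR' a_b; have := leaf (inr b); rewrite /= bR'.
  by move: a_b; rewrite inE => /andP [-> ->] /(_ isT) [].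
have pos : 0 < #|L :\ a|.
  apply: leq_trans (subset_leq_card (nbhd_sub _ b')).
  by move: (gt1 b' bR); rewrite nbhd_setD1 (cardsD1 a (nbhd L b')) a_b'.
move: lt_n pos; rewrite (cardsD1 a L) aL => lt_n pos.
have lt_IH : #|L :\ a| + #|R| < n by lia.
have := IH (L :\ a) R lt_IH (acyclic_subset (subsetDl L [set a]) (subxx R) acyc).
lia.
Qed.

Lemma connect_branching L R a a' : a \in L -> a != a' ->
  connect (bip_rel L R) (inl a) (inl a') -> exists2 b, a \in nbhd L b & 1 < #|nbhd L b|.
Proof.
move=> aL a_a' conn.
case: (pickP [pred b | (a \in nbhd L b) && (1 < #|nbhd L b|)]) => [b /andP [] | none].
  by exists b.
pose S u := match u with inl x => x == a | inr b => a \in nbhd L b end.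
have S_closed : closed (bip_rel L R) S.
  suff S_edge x b : bip_rel L R (inl x) (inr b) -> S (inl x) = S (inr b).
    by case=> [x|b] [y|b'] //; [apply: S_edge | rewrite bip_rel_sym => /S_edge].
  rewrite /= => /and3P [xL bR Exb].
  apply/idP/idP => [/eqP <- | a_b]; first by rewrite inE xL.
  apply: contraFT (none b) => x_a /=; rewrite a_b /=.
  by apply/card_gt1P; exists a, x; rewrite eq_sym x_a a_b inE xL Exb.
by move: (closed_connect S_closed conn); rewrite !unfold_in /= eqxx eq_sym (negbTE a_a').
Qed.

Lemma acyclic_star L R b0 :
  (forall b, b != b0 -> #|nbhd L b| <= 1) -> acyclic (bip_rel L R).
Proof.
move=> star c uniq_c size_c; apply/negP => cyc.
have nbrs := cycle_two_nbrs (@bip_rel_sym L R) uniq_c size_c cyc.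
have right_hub b : inr b \in c -> b = b0.
  case/nbrs => -[a1|?] [[a2|?] [_ _ a12 e1 e2]] //.
  move: e1 e2 => /= /and3P [a1L _ E1] /and3P [a2L _ E2].
  apply/eqP/negPn/negP => /star; rewrite leqNgt => /negP; apply.
  apply/card_gt1P; exists a1, a2; rewrite !inE a1L a2L E1 E2.
  by split=> //; apply: contraNneq a12 => ->.
have no_left a : inl a \notin c.
  apply/negP => /nbrs [[?|b1] [[?|b2] [b1c b2c b12 _ _]]] //.
  by move: b12; rewrite (right_hub _ b1c) (right_hub _ b2c) eqxx.
case: c uniq_c size_c cyc nbrs no_left right_hub => [//|[a|b] c] _ _ _ nbrs no_left _.
  by move: (no_left a); rewrite mem_head.
case: (nbrs (inr b) (mem_head _ _)) => [[a|?] [_ [ac _ _ _ _]]] //.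
by move: (no_left a); rewrite ac.
Qed.

End Bipartite.

Lemma eq_in_leq_sum (I : eqType) (s : seq I) (F G : I -> nat) :
  {in s, forall x, F x <= G x} -> \sum_(x <- s) G x <= \sum_(x <- s) F x ->
  {in s, F =1 G}.
Proof.
elim: s => [|y s IH] le_FG //; rewrite !big_cons => le_sum x.
have le_y := le_FG y (mem_head y s).
have le_s : {in s, forall x, F x <= G x}.
  by move=> z zs; apply: le_FG; rewrite inE zs orbT.
have sum_s : \sum_(x <- s) F x <= \sum_(x <- s) G x by rewrite !big_seq; apply: leq_sum.
rewrite inE => /predU1P [-> | xs]; first lia.
by apply: IH xs => //; lia.
Qed.

Lemma nondecreasing_bounded_stable (f : nat -> nat) m B :
  (forall k, m <= k -> f k <= f k.+1) -> (forall k, m <= k -> f k <= B) ->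
  exists2 N, m <= N & forall k, N <= k -> f k = f N.
Proof.
move=> f_incr f_bnd.
have f_homo i k : m <= i -> i <= k -> f i <= f k.
  move=> mi; elim: k => [|k IHk]; first by rewrite leqn0 => /eqP ->.
  rewrite leq_eqVlt => /predU1P [-> // | ik].
  exact: leq_trans (IHk ik) (f_incr _ (leq_trans mi ik)).
suff stable i : m <= i -> exists2 N, i <= N & forall k, N <= k -> f k = f N.
  exact: stable.
have [d] := ubnP (B - f i); elim: d i => // d IH i lt_d mi.
case: (classic (exists2 k, i <= k & f k != f i)) => [[k ik fk_fi] | no_change].
  have mk := leq_trans mi ik.
  have lt_i : f i < f k by rewrite ltn_neqAle eq_sym fk_fi f_homo.
  have lt_k : B - f k < d by have := f_bnd k mk; lia.
  have [N kN stableN] := IH k lt_k mk.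
  by exists N => //; apply: leq_trans ik kN.
exists i => // k ik; apply/eqP/negPn/negP => fk_fi.
by apply: no_change; exists k.
Qed.

Section ExtensionGraph.
Variables (A : finType) (X : config A -> Prop).
Implicit Types (w : seq A) (a b : A).

Definition ext_pair w a b := Lang X (a :: rcons w b).

Local Notation ext_rel w := (bip_rel (ext_pair w) (L1 X w) (R1 X w)).

Lemma ext_relE w :
  [rel u v | [&& ext_vert X w u, ext_vert X w v & ext_edge X w u v]] =2 ext_rel w.
Proof. by case=> [a|b] [a'|b'] /=; rewrite ?andbF // andbCA. Qed.

Lemma nbhd_ext w b : nbhd (ext_pair w) (L1 X w) b = L1 X (rcons w b).
Proof.
by apply/setP => a; rewrite !inE /ext_pair andb_idl // -rcons_cons => /Lang_belast.
Qed.

Lemma ext_right_nbr w b :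
  b \in R1 X w -> exists2 a, a \in L1 X w & ext_rel w (inl a) (inr b).
Proof.
move=> bR; have := bR; rewrite inE => /Lang_extend_left [a]; rewrite -nbhd_ext => a_b.
by exists a; [apply: (subsetP (nbhd_sub _ _ _)) a_b | rewrite bip_relE].
Qed.

Lemma ext_tree_connect w u v : ext_tree X w ->
  ext_vert X w u -> ext_vert X w v -> connect (ext_rel w) u v.
Proof. by case=> _ [conn _] Vu Vv; rewrite -(eq_connect (ext_relE w)); apply: conn. Qed.

Lemma ext_tree_acyclic w : ext_tree X w -> acyclic (ext_rel w).
Proof.
by case=> _ [_ acyc] c uniq_c size_c; rewrite -(eq_cycle (ext_relE w)); apply: acyc.
Qed.

Lemma ext_tree_sum_excess w : ext_tree X w ->
  \sum_(b : A) (ell X (rcons w b)).-1 <= (ell X w).-1.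
Proof.
move=> tree; rewrite (bigID (fun b => b \in R1 X w)) /= [X in _ + X]big1 ?addn0.
  rewrite (eq_bigr (fun b => (#|nbhd (ext_pair w) (L1 X w) b|).-1)) => [|b _].
    exact: acyclic_sum_excess (ext_tree_acyclic tree).
  by rewrite nbhd_ext.
by move=> b; rewrite inE => /ell_eq0 ->.
Qed.

Lemma ext_tree_branching w a : ext_tree X w -> 1 < ell X w -> a \in L1 X w ->
  exists2 b, a \in L1 X (rcons w b) & 1 < ell X (rcons w b).
Proof.
move=> tree gt1 aL.
have [a' a'L a_a'] : exists2 a', a' \in L1 X w & a != a'.
  case/card_gt1P: gt1 => a1 [a2 [a1L a2L a12]].
  by case: (eqVneq a a1) => [-> | ?]; [exists a2 | exists a1].
have [b] := connect_branching aL a_a' (@ext_tree_connect w (inl a) (inl a') tree aL a'L).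
by rewrite nbhd_ext; exists b.
Qed.

Lemma ext_tree_left_special_rcons w : ext_tree X w -> left_special X w ->
  exists b, left_special X (rcons w b).
Proof.
move=> tree /andP [Lw gt1]; have [a aL] := Lang_extend_left Lw.
by have [b _ /ell_gt1_left_special] := ext_tree_branching tree gt1 aL; exists b.
Qed.

Lemma ell_rcons_unique_left_special w b0 : ext_tree X w -> left_special X w ->
  (forall b, left_special X (rcons w b) -> b = b0) -> ell X (rcons w b0) = ell X w.
Proof.
move=> tree /andP [_ gt1] unique; apply/eqP; rewrite eqn_leq ell_rcons subset_leq_card //.
apply/subsetP => a aL.
by have [b ab /ell_gt1_left_special /unique <-] := ext_tree_branching tree gt1 aL.
Qed.

Fixpoint words n : seq (seq A) :=
  if n is k.+1 then [seq rcons w b | w <- words k, b <- enum A] else [:: [::]].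

Lemma words_size n w : w \in words n -> size w = n.
Proof.
elim: n w => [|n IH] w /=; first by rewrite inE => /eqP ->.
by case/allpairsPdep => [w' [b [/IH <- _ ->]]]; rewrite size_rcons.
Qed.

Lemma mem_words w : w \in words (size w).
Proof.
elim/last_ind: w => [|w b IH]; first by rewrite mem_seq1.
by rewrite size_rcons; apply/allpairsPdep; exists w, b; rewrite IH mem_enum.
Qed.

Lemma sum_words_succ n (F : seq A -> nat) :
  \sum_(w <- words n.+1) F w = \sum_(w <- words n) \sum_(b : A) F (rcons w b).
Proof. by rewrite /= big_allpairs_dep; apply: eq_bigr => w _; rewrite big_enum. Qed.

Definition excess n := \sum_(w <- words n) (ell X w).-1.
Definition count_left_special n := \sum_(w <- words n) (left_special X w : nat).

Lemma count_left_special_le_excess n : count_left_special n <= excess n.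
Proof.
by apply: leq_sum => w _; case/boolP: (left_special X w) => //= /andP [_]; case: ell.
Qed.

Section Threshold.
Variable m : nat.
Hypothesis dendric : eventually_dendric_thr X m.

Lemma excess_succ_le k : m <= k -> excess k.+1 <= excess k.
Proof.
move=> mk; rewrite /excess sum_words_succ !big_seq; apply: leq_sum => w wk.
have [Lw | nLw] := boolP (Lang X w).
  by apply/ext_tree_sum_excess/dendric; rewrite ?(words_size wk).
by rewrite big1 // => b _; rewrite ell_eq0 //; apply: contra nLw => /Lang_belast.
Qed.

Lemma excess_le k : m <= k -> excess k <= excess m.
Proof.
elim: k => [|k IH]; first by rewrite leqn0 => /eqP ->.
rewrite leq_eqVlt => /predU1P [<- // | mk].
exact: leq_trans (excess_succ_le mk) (IH mk).
Qed.

Lemma left_special_le_sum_rcons w : m <= size w ->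
  (left_special X w : nat) <= \sum_(b : A) (left_special X (rcons w b) : nat).
Proof.
move=> mw; case LSw: (left_special X w) => //=.
have [Lw _] := andP LSw.
have [b LSb] := ext_tree_left_special_rcons (dendric Lw mw) LSw.
by rewrite (bigD1 b) //= LSb.
Qed.

Lemma count_left_special_succ_ge k : m <= k -> count_left_special k <= count_left_special k.+1.
Proof.
move=> mk; rewrite /count_left_special sum_words_succ !big_seq; apply: leq_sum => w wk.
by apply: left_special_le_sum_rcons; rewrite (words_size wk).
Qed.

Lemma count_left_special_stable :
  exists2 N, m <= N & forall k, N <= k -> count_left_special k = count_left_special N.
Proof.
apply: (nondecreasing_bounded_stable (B := excess m)) => k mk.
  exact: count_left_special_succ_ge.
exact: leq_trans (count_left_special_le_excess k) (excess_le mk).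
Qed.

Lemma unique_left_special_rcons w : m <= size w ->
  count_left_special (size w).+1 = count_left_special (size w) -> left_special X w ->
  exists b0, forall b, left_special X (rcons w b) = (b == b0).
Proof.
move=> mw count_eq LSw.
have le_FG : {in words (size w), forall v,
    (left_special X v : nat) <= \sum_(b : A) (left_special X (rcons v b) : nat)}.
  by move=> v vw; apply: left_special_le_sum_rcons; rewrite (words_size vw).
have sum_le : \sum_(v <- words (size w)) \sum_(b : A) (left_special X (rcons v b) : nat)
    <= count_left_special (size w).
  by rewrite -(sum_words_succ _ (fun v => left_special X v : nat)) -count_eq.
have := eq_in_leq_sum le_FG sum_le (mem_words w); rewrite /= LSw /= => /esym sum1.
have /cards1P [b0 LS_b0] : #|[set b | left_special X (rcons w b)]| == 1.
  rewrite -sum1_card big_mkcond; apply/eqP; rewrite -[RHS]sum1 /=; apply: eq_bigr => b _.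
  by rewrite inE; case: left_special.
by exists b0 => b; rewrite -in_set1 -LS_b0 inE.
Qed.

End Threshold.

Definition uniquely_extendable_LS n := forall w, in_LS_ge X n w ->
  exists b, [/\ in_LS X (rcons w b), (forall b', in_LS X (rcons w b') -> b' = b)
              & ell X (rcons w b) = ell X w].

Lemma eventually_dendric_uniquely_extendable_LS m :
  eventually_dendric_thr X m -> exists n, uniquely_extendable_LS n.
Proof.
move=> dendric; have [N mN stable] := count_left_special_stable dendric.
exists N => w /andP [LSw Nw].
have mw := leq_trans mN Nw.
have Lw : Lang X w by case/andP: LSw.
have count_eq : count_left_special (size w).+1 = count_left_special (size w).
  by rewrite (stable _ Nw) (stable _ (leqW Nw)).
have [b0 LS_b0] := unique_left_special_rcons dendric mw count_eq LSw.
have unique b : left_special X (rcons w b) -> b = b0 by rewrite LS_b0 => /eqP.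
exists b0; split.
- by rewrite /in_LS LS_b0 eqxx size_rcons.
- by move=> b /andP [/unique].
- exact: ell_rcons_unique_left_special (dendric w Lw mw) LSw unique.
Qed.

Lemma ext_tree_of_hub w b0 h : (exists u, ext_vert X w u) ->
  (forall b, b != b0 -> ell X (rcons w b) <= 1) ->
  (forall u, ext_vert X w u -> connect (ext_rel w) u h) -> ext_tree X w.
Proof.
move=> nonempty star hub; split; [|split] => // [u v Vu Vv | c uniq_c size_c].
  rewrite (eq_connect (ext_relE w)); apply: connect_trans (hub u Vu) _.
  by rewrite (sym_connect_sym (@bip_rel_sym _ _ _ _)); apply: hub.
rewrite (eq_cycle (ext_relE w)); apply: (@acyclic_star _ _ _ _ b0) => // b /star.
by rewrite nbhd_ext.
Qed.

Lemma ext_hub_right w b0 : Lang X (rcons w b0) -> L1 X (rcons w b0) = L1 X w ->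
  forall u, ext_vert X w u -> connect (ext_rel w) u (inr b0).
Proof.
move=> Lb0 L1_b0.
have edge a : a \in L1 X w -> ext_rel w (inl a) (inr b0).
  by rewrite bip_relE ?nbhd_ext ?L1_b0 // inE.
case=> [a aL | b bR]; first exact/connect1/edge.
have [a aL ab] := ext_right_nbr bR.
by apply: connect_trans (connect1 _) (connect1 (edge a aL)); rewrite bip_rel_sym.
Qed.

Lemma ext_hub_left w a0 : L1 X w = [set a0] ->
  forall u, ext_vert X w u -> connect (ext_rel w) u (inl a0).
Proof.
move=> L1_a0 [a | b bR] /=; first by rewrite L1_a0 inE => /eqP ->.
have [a] := ext_right_nbr bR; rewrite L1_a0 inE => /eqP -> edge.
by apply: connect1; rewrite bip_rel_sym.
Qed.

Lemma uniquely_extendable_LS_eventually_dendric n :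
  uniquely_extendable_LS n -> eventually_dendric_thr X n.
Proof.
move=> unique_ext w Lw nw; have [a0 a0L] := Lang_extend_left Lw.
have nonempty : exists u, ext_vert X w u by exists (inl a0).
case LSw : (left_special X w).
  have w_LS : in_LS_ge X n w by rewrite /in_LS_ge LSw.
  have [b0 [/andP [LSb0 _] b0_unique ell_b0]] := unique_ext w w_LS.
  have Lb0 : Lang X (rcons w b0) by case/andP: LSb0.
  have L1_b0 : L1 X (rcons w b0) = L1 X w.
    by apply/eqP; rewrite eqEcard L1_rcons -/(ell X w) -ell_b0 leqnn.
  apply: (ext_tree_of_hub nonempty _ (ext_hub_right Lb0 L1_b0)) => b b_b0.
  rewrite leqNgt; apply: contra b_b0 => /ell_gt1_left_special LSb.
  by apply/eqP/b0_unique; rewrite /in_LS LSb size_rcons.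
have ell_le1 : ell X w <= 1.
  by move: LSw; rewrite /left_special Lw /= => /negbT; rewrite -ltnNge.
have L1_a0 : L1 X w = [set a0].
  by apply/eqP; rewrite eq_sym eqEcard sub1set a0L cards1.
apply: (@ext_tree_of_hub w a0 _ nonempty _ (ext_hub_left L1_a0)) => b _.
exact: leq_trans (ell_rcons X w b) ell_le1.
Qed.

End ExtensionGraph.

Theorem mainTheorem3 (A : finType) (X : config A -> Prop) :
  shift_space X ->
  (eventually_dendric X <->
   exists n : nat, forall w : seq A, in_LS_ge X n w ->
     exists b : A, [/\ in_LS X (rcons w b),
                       (forall b' : A, in_LS X (rcons w b') -> b' = b) &
                       ell X (rcons w b) = ell X w]).
Proof.
move=> _; split=> [[m dendric] | [n unique_ext]].
  exact: eventually_dendric_uniquely_extendable_LS dendric.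
by exists n; apply: uniquely_extendable_LS_eventually_dendric.
Qed.
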